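(* Let $S$ be a Damek–Ricci space with $\mathfrak{s}=\mathfrak{a}\oplus\mathfrak{v}\oplus\mathfrak{z}$. Let $\Sigma$ be a totally geodesic subgroup of $S$ with $T_e\Sigma=\mathfrak{a}\oplus\mathfrak{v}'\oplus\mathfrak{z}'$, where $\mathfrak{v}'\subseteq\mathfrak{v}$ and $\mathfrak{z}'\subseteq\mathfrak{z}$. Let $H$ be a closed subgroup of $S$ whose Lie algebra $\mathfrak{h}$ is orthogonal to $T_e\Sigma$, and let $\eta$ be a Killing vector field induced by the action of $H$ on $S$ by left translations. Write $\eta(e)=X+U$ with $U\in\mathfrak{v}$, $X\in\mathfrak{z}$. Then the following are equivalent: (i) $\langle\nabla_v\eta,w\rangle=0$ for all $v,w\in T_e\Sigma$; (ii) $J_X\mathfrak{v}'\perp\mathfrak{v}'$.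
   Context: Damek–Ricci space: let $\mathfrak{n}=\mathfrak{v}\oplus\mathfrak{z}$ be a real Lie algebra with inner product $\langle\cdot,\cdot\rangle$ such that $\mathfrak{v}\perp\mathfrak{z}$, $[\mathfrak{v},\mathfrak{v}]\subseteq\mathfrak{z}$, $[\mathfrak{v},\mathfrak{z}]=[\mathfrak{z},\mathfrak{z}]=0$; define $J_Z\in\mathrm{End}(\mathfrak{v})$ for $Z\in\mathfrak{z}$ by $\langle J_ZU,V\rangle=\langle[U,V],Z\rangle$, and assume $J_Z^2=-\langle Z,Z\rangle\mathrm{id}_{\mathfrak{v}}$. Let $\mathfrak{a}=\mathbb{R}A$, $\mathfrak{s}=\mathfrak{a}\oplus\mathfrak{n}$ with $[A,U]=\tfrac12U$ ($U\in\mathfrak{v}$), $[A,X]=X$ ($X\in\mathfrak{z}$), inner product extended with $A$ a unit vector orthogonal to $\mathfrak{n}$. $S$ is the simply connected Lie group with Lie algebra $\mathfrak{s}$ with the induced left-invariant metric, identity $e$, $T_eS=\mathfrak{s}$, Levi-Civita connection $\nabla$. The Killing field induced by $Y\in\mathfrak{h}$ under left translations is $p\mapsto\frac{d}{dt}\big|_{t=0}\exp(tY)p$ (the right-invariant extension of $Y$). *)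

(* Lie-algebra level model of a Damek-Ricci space. *)
From HB Require Import structures.
From mathcomp Require Import all_boot all_order all_algebra.
Set Implicit Arguments. Unset Strict Implicit. Unset Printing Implicit Defensive.
Import Order.TTheory GRing.Theory Num.Theory.
Local Open Scope ring_scope.

Section DR.
Variables (R : realFieldType) (n m : nat).

Definition dotv (U V : 'rV[R]_n) : R := (U *m V^T) 0 0.
Definition dotz (X Y : 'rV[R]_m) : R := (X *m Y^T) 0 0.

Definition is_bracket (br : 'rV[R]_n -> 'rV[R]_n -> 'rV[R]_m) : Prop :=
  (forall V, linear (br ^~ V)) /\ (forall U, linear (br U)) /\
  (forall U V, br U V = - br V U).

(* J_Z defined by <J_Z U, V> = <[U,V], Z>  (coordinates in the standard basis) *)
Definition Jmap (br : 'rV[R]_n -> 'rV[R]_n -> 'rV[R]_m) (Z : 'rV[R]_m)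
  (U : 'rV[R]_n) : 'rV[R]_n :=
  \row_j dotz (br U (delta_mx 0 j)) Z.

Definition Htype (br : 'rV[R]_n -> 'rV[R]_n -> 'rV[R]_m) : Prop :=
  is_bracket br /\
  forall Z U, Jmap br Z (Jmap br Z U) = - (dotz Z Z) *: U.

(* s = a + v + z, an element is (a, U, X) meaning a A + U + X *)
Definition sT := (R * 'rV[R]_n * 'rV[R]_m)%type.

Definition s_add (x y : sT) : sT := (x.1.1 + y.1.1, x.1.2 + y.1.2, x.2 + y.2).
Definition s_scale (c : R) (x : sT) : sT := (c * x.1.1, c *: x.1.2, c *: x.2).
Definition s_zero : sT := (0, 0, 0).

Definition s_ip (x y : sT) : R := x.1.1 * y.1.1 + dotv x.1.2 y.1.2 + dotz x.2 y.2.

Definition s_br (br : 'rV[R]_n -> 'rV[R]_n -> 'rV[R]_m) (x y : sT) : sT :=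
  (0,
   (x.1.1 / 2%:R) *: y.1.2 - (y.1.1 / 2%:R) *: x.1.2,
   x.1.1 *: y.2 - y.1.1 *: x.2 + br x.1.2 y.1.2).

(* Levi-Civita connection of the left-invariant metric, on left-invariant
   fields (Koszul formula):  s_nabla_ip br x y w = < nabla_x y , w >  *)
Definition s_nabla_ip br (x y w : sT) : R :=
  (s_ip (s_br br x y) w - s_ip (s_br br y w) x + s_ip (s_br br w x) y) / 2%:R.

(* For the Killing field eta induced by Y (right-invariant extension of Y),
   [V^L, eta] = 0 for left-invariant V^L, so at e:
   < nabla_v eta , w > = < nabla_Y v , w >  (left-invariant connection). *)
Definition killing_nabla_ip br (Y v w : sT) : R := s_nabla_ip br Y v w.

(* T_e Sigma = a + v' + z', with v' = row space of V', z' = row space of Z' *)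
Definition in_sub (V' : 'M[R]_n) (Z' : 'M[R]_m) (x : sT) : Prop :=
  (x.1.2 <= V')%MS /\ (x.2 <= Z')%MS.

Definition is_subalgebra br (P : sT -> Prop) : Prop :=
  P s_zero /\ (forall x y, P x -> P y -> P (s_add x y)) /\
  (forall c x, P x -> P (s_scale c x)) /\
  (forall x y, P x -> P y -> P (s_br br x y)).

(* Sigma: connected subgroup with Lie algebra T_e Sigma, totally geodesic:
   second fundamental form (nabla_V W)^perp vanishes (left-invariant, so
   checked at e on left-invariant fields). *)
Definition totally_geodesic_subalg br (P : sT -> Prop) : Prop :=
  is_subalgebra br P /\
  forall v w N, P v -> P w -> (forall u, P u -> s_ip N u = 0) ->
    s_nabla_ip br v w N = 0.

End DR.

(** Write [Y = (0, U, X)]; orthogonality of [h] to [T_e Sigma] kills the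
    [a]-component and makes [U] and [X] orthogonal to [v'] and [z'].  The
    Koszul formula then reduces [<nabla_Y v, w>] for [v, w] in [T_e Sigma] to
    [-<[v, w], X>/2 = -<J_X v, w>/2], the remaining terms vanishing because
    total geodesy of [Sigma] forces [<[P, V], Z> = 0] for [P] orthogonal to
    [v'], [V] in [v'] and [Z] in [z']. *)
From HB Require Import structures.
From mathcomp Require Import all_boot all_order all_algebra.
From mathcomp Require Import ring lra.
Set Implicit Arguments. Unset Strict Implicit. Unset Printing Implicit Defensive.
Import Order.TTheory GRing.Theory Num.Theory.
Local Open Scope ring_scope.

Section RowDot.
Variables (R : realFieldType) (k : nat).
Implicit Types (A B C : 'rV[R]_k) (a : R).

Lemma dotzE A B : dotz A B = dotv A B.
Proof. by []. Qed.

Lemma dotvC A B : dotv A B = dotv B A.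
Proof. by rewrite /dotv -{1}(trmxK A) -trmx_mul mxE. Qed.

Lemma dotvDl A B C : dotv (A + B) C = dotv A C + dotv B C.
Proof. by rewrite /dotv mulmxDl mxE. Qed.

Lemma dotvNl A B : dotv (- A) B = - dotv A B.
Proof. by rewrite /dotv mulNmx mxE. Qed.

Lemma dotvZl a A B : dotv (a *: A) B = a * dotv A B.
Proof. by rewrite /dotv -scalemxAl mxE. Qed.

Lemma dotv0l B : dotv 0 B = 0.
Proof. by rewrite /dotv mul0mx mxE. Qed.

Lemma dotv0r A : dotv A 0 = 0.
Proof. by rewrite dotvC dotv0l. Qed.

End RowDot.

Definition dotvE :=
  (dotzE, dotvDl, dotvNl, dotvZl, dotv0l, dotv0r).

Lemma linear_row_sum_delta (R : pzRingType) (n k : nat)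
    (f : 'rV[R]_n -> 'rV[R]_k) :
  linear f -> forall u, f u = \sum_(j < n) u 0 j *: f 'e_j.
Proof.
move=> lin_f u.
pose F : {linear 'rV[R]_n -> 'rV[R]_k} :=
  HB.pack f (GRing.isLinear.Build _ _ _ _ f lin_f).
change (F u = \sum_(j < n) u 0 j *: F 'e_j).
by rewrite {1}(row_sum_delta u) linear_sum; apply: eq_bigr => j _; rewrite linearZ.
Qed.

Section DamekRicci.
Variables (R : realFieldType) (n m : nat).
Variable br : 'rV[R]_n -> 'rV[R]_n -> 'rV[R]_m.
Hypothesis br_bracket : is_bracket br.

Lemma dotv_Jmap X U V : dotv (Jmap br X U) V = dotz (br U V) X.
Proof.
have [_ [br_linear _]] := br_bracket.
rewrite (linear_row_sum_delta (br_linear U) V) /dotz mulmx_suml summxE.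
rewrite /dotv mxE; apply: eq_bigr => j _.
by rewrite -scalemxAl [in RHS]mxE [Jmap _ _ _ _ _]mxE [V^T _ _]mxE mulrC.
Qed.

Variables (V' : 'M[R]_n) (Z' : 'M[R]_m).

Lemma orth_in_sub_components (Y : sT R n m) :
    (forall y, in_sub V' Z' y -> s_ip Y y = 0) ->
  [/\ Y.1.1 = 0, forall V, (V <= V')%MS -> dotv Y.1.2 V = 0
               & forall Z, (Z <= Z')%MS -> dotz Y.2 Z = 0].
Proof.
move=> Y_orth; split=> [| V sVV' | Z sZZ'].
- have := Y_orth (1, 0, 0) (conj (sub0mx _ _) (sub0mx _ _)).
  by rewrite /s_ip !dotvE mulr1 !addr0.
- have := Y_orth (0, V, 0) (conj sVV' (sub0mx _ _)).
  by rewrite /s_ip !dotvE mulr0 add0r addr0.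
- have := Y_orth (0, 0, Z) (conj (sub0mx _ _) sZZ').
  by rewrite /s_ip !dotvE mulr0 !add0r.
Qed.

Hypothesis geodesic : totally_geodesic_subalg br (in_sub V' Z').

(* By Koszul, [<nabla_V Z, P>] reduces to [<[P, V], Z>/2] for these vectors. *)
Lemma geodesic_bracket_orth P V Z :
    (forall W, (W <= V')%MS -> dotv P W = 0) ->
    (V <= V')%MS -> (Z <= Z')%MS ->
  dotz (br P V) Z = 0.
Proof.
move=> P_orth sVV' sZZ'; have [_ second_form0] := geodesic.
have P_normal u : in_sub V' Z' u -> s_ip (0, P, 0) u = 0.
  by case=> su _; rewrite /s_ip /= P_orth // !dotvE mul0r !addr0.
have := second_form0 (0, V, 0) (0, 0, Z) (0, P, 0)
  (conj sVV' (sub0mx _ _)) (conj (sub0mx _ _) sZZ') P_normal.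
rewrite /s_nabla_ip /s_ip /s_br /= !dotvE; lra.
Qed.

Lemma killing_nabla_ip_in_sub U X v w :
    (forall V, (V <= V')%MS -> dotv U V = 0) ->
    (forall Z, (Z <= Z')%MS -> dotz X Z = 0) ->
    in_sub V' Z' v -> in_sub V' Z' w ->
  killing_nabla_ip br (0, U, X) v w = - dotv (Jmap br X v.1.2) w.1.2 / 2%:R.
Proof.
move=> U_orth X_orth.
case: v w => [[a1 V1] Z1] [[a2 V2] Z2] [/= sV1 sZ1] [/= sV2 sZ2].
have [_ [_ br_skew]] := br_bracket.
have UV1 : dotv (br U V1) Z2 = 0 := geodesic_bracket_orth U_orth sV1 sZ2.
have UV2 : dotv (br U V2) Z1 = 0 := geodesic_bracket_orth U_orth sV2 sZ1.
have {}X_orth Z : (Z <= Z')%MS -> dotv X Z = 0 := X_orth Z.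
rewrite dotv_Jmap /killing_nabla_ip /s_nabla_ip /s_ip /s_br /= (br_skew V2 U).
rewrite !dotvE (dotvC V1 U) (dotvC V2 U) (dotvC Z1 X) (dotvC Z2 X).
rewrite !U_orth // !X_orth // UV1 UV2; ring.
Qed.

End DamekRicci.

Theorem lemma3p3 (R : realFieldType) (n m : nat)
  (br : 'rV[R]_n -> 'rV[R]_n -> 'rV[R]_m)
  (V' : 'M[R]_n) (Z' : 'M[R]_m) (h : sT R n m -> Prop) (Y : sT R n m) :
  Htype br ->
  totally_geodesic_subalg br (in_sub V' Z') ->
  is_subalgebra br h ->
  (forall x y, h x -> in_sub V' Z' y -> s_ip x y = 0) ->
  h Y ->
  (forall v w, in_sub V' Z' v -> in_sub V' Z' w -> killing_nabla_ip br Y v w = 0)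
  <->
  (forall U V, (U <= V')%MS -> (V <= V')%MS -> dotv (Jmap br Y.2 U) V = 0).
Proof.
move=> [br_bracket _] geodesic _ h_orth hY.
have [] := orth_in_sub_components (h_orth _ ^~ hY).
case: Y {hY} => [[a U] X] /= -> {a} U_orth X_orth.
have nablaE := killing_nabla_ip_in_sub br_bracket geodesic U_orth X_orth.
have in_sub_v W : (W <= V')%MS -> in_sub V' Z' (0, W, 0).
  by move=> sW; split; rewrite //= sub0mx.
split=> [nabla0 U1 V1 sU1 sV1 | J0 v w v_in w_in].
- have := nabla0 _ _ (in_sub_v _ sU1) (in_sub_v _ sV1).
  by rewrite (nablaE _ _ (in_sub_v _ sU1) (in_sub_v _ sV1)) /= => J_half0; lra.
- have [[sv _] [sw _]] := (v_in, w_in).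
  by rewrite (nablaE _ _ v_in w_in) J0 ?oppr0 ?mul0r.
Qed.
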